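(* Let $\{(x_i,y_i)\}_{i=1}^n\subset\mathcal X\times\mathcal Y$ be a dataset and $\alpha\in(0,1)$. Let $F:\mathcal X\to\mathcal Y$ be a deterministic classifier and let $F'$ be a randomized classifier (for each $x$, $F'(x)$ is a $\mathcal Y$-valued random variable) whose average zero-one loss equals that of $F$, i.e. $$\frac1n\sum_{i=1}^n \Pr(F'(x_i)\neq y_i)=\frac1n\sum_{i=1}^n \mathbf 1_{\{F(x_i)\neq y_i\}}.$$ Define $$\mathrm{CVaR}_\alpha(F)=\max_{w\in\Delta_n,\ w_i\le\frac1{\alpha n}\ \forall i}\sum_{i=1}^n w_i\mathbf 1_{\{F(x_i)\neq y_i\}},\qquad \mathrm{CVaR}_\alpha(F')=\max_{w\in\Delta_n,\ w_i\le\frac1{\alpha n}\ \forall i}\sum_{i=1}^n w_i\Pr(F'(x_i)\neq y_i),$$ where $\Delta_n=\{w\in\mathbb R^n:w_i\ge0,\sum_iw_i=1\}$. Then $\mathrm{CVaR}_\alpha(F')\le \mathrm{CVaR}_\alpha(F)$.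
   Context: The $\alpha$-CVaR zero-one loss measures the average zero-one loss over the worst $\alpha$ fraction of the dataset; for a randomized classifier the per-sample loss is the probability of misclassification. *)

From HB Require Import structures.
From mathcomp Require Import all_boot all_order all_algebra.
From mathcomp Require Import all_classical all_reals all_analysis.
Set Implicit Arguments. Unset Strict Implicit. Unset Printing Implicit Defensive.
Import Order.TTheory GRing.Theory Num.Theory.
Local Open Scope classical_set_scope.
Local Open Scope ring_scope.

Definition cvar_weights (R : realType) (n : nat) (alpha : R) (w : 'I_n -> R) : Prop :=
  (forall i, 0 <= w i) /\ (\sum_(i < n) w i = 1) /\
  (forall i, w i <= (alpha * n%:R)^-1).

(* alpha-CVaR of a per-sample loss vector: max over feasible weights of the
   weighted loss (written as the supremum; the maximum is attained). *)
Definition cvar (R : realType) (n : nat) (alpha : R) (l : 'I_n -> R) : R :=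
  sup [set s : R | exists w : 'I_n -> R,
         cvar_weights alpha w /\ s = \sum_(i < n) w i * l i].

Definition loss01 (R : realType) (X : Type) (Y : eqType) (n : nat)
  (x : 'I_n -> X) (y : 'I_n -> Y) (F : X -> Y) (i : 'I_n) : R :=
  (F (x i) != y i)%:R.

Definition rloss01 (R : realType) (X : Type) (d : measure_display)
  (Y : measurableType d) (n : nat) (x : 'I_n -> X) (y : 'I_n -> Y)
  (F' : X -> probability Y R) (i : 'I_n) : R :=
  fine (F' (x i) [set z | z <> y i]).

Arguments loss01 R {X Y n} x y F i.
Arguments rloss01 R {X d Y n} x y F' i.

From HB Require Import structures.
From mathcomp Require Import all_boot all_order all_algebra.
From mathcomp Require Import all_classical all_reals all_analysis.
From mathcomp Require Import lra.
Set Implicit Arguments.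
Unset Strict Implicit.
Unset Printing Implicit Defensive.
Import Order.TTheory GRing.Theory Num.Theory.
Local Open Scope classical_set_scope.
Local Open Scope ring_scope.

(* Let c = 1/(alpha n) be the weight cap. For losses in [0, 1] and weights in
   the simplex capped at c, the weighted loss is at most min(1, c * total loss).
   For a 0-1 loss with total k this bound is attained: spread the mass evenly
   on the k misclassified samples, and if c k < 1 put the remaining mass evenly
   on the other samples. Hence the CVaR of the 0-1 loss is min(1, c k), which
   dominates the CVaR of any loss in [0, 1] with the same total k. *)

Section capped_simplex.
Variables (R : realFieldType) (n : nat) (c : R).

Lemma capped_weighted_sum_le (p w : 'I_n -> R) :
  (forall i, 0 <= p i <= 1) -> (forall i, 0 <= w i) -> \sum_i w i = 1 ->
  (forall i, w i <= c) ->
  \sum_i w i * p i <= Num.min 1 (c * \sum_i p i).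
Proof.
move=> p01 w_ge0 w_sum1 w_le_c; rewrite le_min; apply/andP; split.
  rewrite -w_sum1; apply: ler_sum => i _.
  by have := p01 i; have := w_ge0 i; nra.
rewrite mulr_sumr; apply: ler_sum => i _.
by have := p01 i; have := w_ge0 i; have := w_le_c i; nra.
Qed.

Lemma indicator_ge0_le1 (b : 'I_n -> bool) i : 0 <= ((b i)%:R : R) <= 1.
Proof. by case: (b i); rewrite /= lexx ler01. Qed.

Variable b : 'I_n -> bool.
Let k := \sum_i (b i)%:R : R.

Lemma sum_indicator_ge0 : 0 <= k.
Proof. by apply: sumr_ge0 => i _; rewrite ler0n. Qed.

Lemma sum_indicator_le_card : k <= n%:R.
Proof.
rewrite -[n in n%:R]card_ord -sumr_const.
by apply: ler_sum => i _; have /andP[] := indicator_ge0_le1 b i.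
Qed.

Lemma capped_weights_saturated : 1 <= c * k ->
  exists w : 'I_n -> R, [/\ forall i, 0 <= w i, \sum_i w i = 1,
    forall i, w i <= c & \sum_i w i * (b i)%:R = 1].
Proof.
move=> ck_ge1.
have k_gt0 : 0 < k.
  rewrite lt_neqAle sum_indicator_ge0 andbT; apply: contraTneq ck_ge1 => <-.
  by rewrite mulr0 -ltNge ltr01.
exists (fun i => (b i)%:R / k); split.
- by move=> i; rewrite divr_ge0 ?ler0n ?ltW.
- by rewrite -mulr_suml divff ?gt_eqF.
- move=> i; rewrite ler_pdivrMr //; case: (b i) => /=; nra.
- transitivity (k / k); last exact: divff (lt0r_neq0 k_gt0).
  rewrite /k mulr_suml; apply: eq_bigr => i _.
  by case: (b i); rewrite ?(mulr1n, mulr0n, mulr1, mulr0, mul0r).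
Qed.

Lemma capped_weights_unsaturated : 1 <= n%:R * c -> c * k < 1 ->
  exists w : 'I_n -> R, [/\ forall i, 0 <= w i, \sum_i w i = 1,
    forall i, w i <= c & \sum_i w i * (b i)%:R = c * k].
Proof.
move=> nc_ge1 ck_lt1.
have k_ge0 := sum_indicator_ge0.
have k_lt_n : k < n%:R.
  by have := sum_indicator_le_card; rewrite le_eqVlt => /orP[/eqP nk|//]; nra.
have nk_gt0 : 0 < n%:R - k by lra.
set rest := (1 - c * k) / (n%:R - k).
have rest_ge0 : 0 <= rest by apply: divr_ge0; lra.
have rest_le_c : rest <= c by rewrite ler_pdivrMr //; nra.
exists (fun i => if b i then c else rest); split.
- by move=> i; case: (b i) => //; nra.
- have -> : \sum_i (if b i then c else rest)
            = \sum_i ((b i)%:R * c + (1 - (b i)%:R) * rest).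
    by apply: eq_bigr => i _; case: (b i); rewrite /= ?subrr; lra.
  rewrite big_split /= -!mulr_suml sumrB sumr_const card_ord -/k.
  by rewrite /rest mulrCA divff ?gt_eqF // mulr1; lra.
- by move=> i; case: (b i).
- rewrite mulr_sumr; apply: eq_bigr => i _.
  by case: (b i); rewrite ?mulr0 ?mulr1.
Qed.

End capped_simplex.

Section cvar_bounds.
Variables (R : realType) (n : nat) (alpha : R).
Hypotheses (n_gt0 : (0 < n)%N) (alpha_gt0 : 0 < alpha) (alpha_le1 : alpha <= 1).

Lemma n_mul_cap_ge1 : 1 <= n%:R * (alpha * n%:R)^-1.
Proof.
have n_gt0' : (0 : R) < n%:R by rewrite ltr0n.
rewrite invfM mulrCA divff ?gt_eqF // mulr1.
by rewrite -invr1 lef_pV2 ?posrE.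
Qed.

Lemma cvar_weights_uniform : cvar_weights alpha (fun _ : 'I_n => (n%:R)^-1).
Proof.
have n_gt0' : (0 : R) < n%:R by rewrite ltr0n.
split; first by move=> i; rewrite invr_ge0 ltW.
split; first by rewrite sumr_const card_ord -[_ *+ _]mulr_natr mulVf ?gt_eqF.
move=> i; have := n_mul_cap_ge1.
by rewrite -ler_pdivrMl // mulr1.
Qed.

Lemma cvar_le_min (p : 'I_n -> R) : (forall i, 0 <= p i <= 1) ->
  cvar alpha p <= Num.min 1 ((alpha * n%:R)^-1 * \sum_i p i).
Proof.
move=> p01; apply: ge_sup.
  by exists (\sum_i (n%:R)^-1 * p i), (fun=> (n%:R)^-1);
    split; first exact: cvar_weights_uniform.
move=> _ [w [[w_ge0 [w_sum1 w_le_c]] ->]].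
exact: capped_weighted_sum_le.
Qed.

Lemma weighted_sum_le_cvar (p w : 'I_n -> R) : (forall i, 0 <= p i <= 1) ->
  cvar_weights alpha w -> \sum_i w i * p i <= cvar alpha p.
Proof.
move=> p01 w_feasible; apply: ub_le_sup; last by exists w.
exists 1 => _ [v [[v_ge0 [v_sum1 v_le_c]] ->]].
apply: le_trans (capped_weighted_sum_le p01 v_ge0 v_sum1 v_le_c) _.
by rewrite ge_min lexx.
Qed.

Lemma cvar_indicator (b : 'I_n -> bool) :
  cvar alpha (fun i => (b i)%:R)
    = Num.min 1 ((alpha * n%:R)^-1 * \sum_i (b i)%:R).
Proof.
have b01 := @indicator_ge0_le1 R n b.
apply/le_anti/andP; split; first exact: cvar_le_min b01.
set c := (alpha * n%:R)^-1.
have [ck_ge1|ck_lt1] := leP 1 (c * \sum_i (b i)%:R).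
- have [w [w_ge0 w_sum1 w_le_c w_attains]] := capped_weights_saturated ck_ge1.
  have := weighted_sum_le_cvar b01 (conj w_ge0 (conj w_sum1 w_le_c)).
  by rewrite w_attains.
- have [w [w_ge0 w_sum1 w_le_c w_attains]] :=
    capped_weights_unsaturated n_mul_cap_ge1 ck_lt1.
  have := weighted_sum_le_cvar b01 (conj w_ge0 (conj w_sum1 w_le_c)).
  by rewrite w_attains.
Qed.

End cvar_bounds.

Lemma rloss01_ge0_le1 (R : realType) (X : Type) (d : measure_display)
  (Y : measurableType d) (n : nat) (x : 'I_n -> X) (y : 'I_n -> Y)
  (F' : X -> probability Y R) :
  (forall z : Y, measurable [set z]) ->
  forall i, 0 <= rloss01 R x y F' i <= 1.
Proof.
move=> singleton_measurable i; rewrite /rloss01.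
have err_measurable : measurable [set z | z <> y i].
  exact: measurableC (singleton_measurable (y i)).
have err_le1 := probability_le1 (F' (x i)) err_measurable.
have err_fin : F' (x i) [set z | z <> y i] \is a fin_num.
  by rewrite ge0_fin_numE // (le_lt_trans err_le1) // ltry.
by rewrite fine_ge0 //=; exact: (fine_le err_fin _ err_le1).
Qed.

Theorem proposition2 (R : realType) (X : Type) (d : measure_display)
  (Y : measurableType d) (n : nat) (x : 'I_n -> X) (y : 'I_n -> Y)
  (alpha : R) (F : X -> Y) (F' : X -> probability Y R) :
  (0 < n)%N -> 0 < alpha < 1 ->
  (forall z : Y, measurable [set z]) ->
  (n%:R)^-1 * \sum_(i < n) rloss01 R x y F' i
    = (n%:R)^-1 * \sum_(i < n) loss01 R x y F i ->
  cvar alpha (rloss01 R x y F') <= cvar alpha (loss01 R x y F).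
Proof.
move=> n_gt0 /andP[alpha_gt0 /ltW alpha_le1] singleton_measurable avg_eq.
have sum_eq : \sum_i rloss01 R x y F' i = \sum_i loss01 R x y F i.
  by apply: mulfI avg_eq; rewrite invr_eq0 pnatr_eq0 -lt0n.
rewrite (cvar_indicator n_gt0 alpha_gt0 alpha_le1 (fun i => F (x i) != y i)).
rewrite -[X in _ * X]sum_eq.
exact (cvar_le_min n_gt0 alpha_gt0 alpha_le1
         (rloss01_ge0_le1 x y F' singleton_measurable)).
Qed.
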